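(* Let $\mathcal D$ be a semicartesian symmetric monoidal category. Then the following are equivalent: (1) $\mathcal D$ can be made into a Markov category (i.e. there exist morphisms $\mathrm{copy}_X\colon X\to X\otimes X$ for all objects $X$ which, together with the unique morphisms $\mathrm{del}_X\colon X\to I$, make $\mathcal D$ a Markov category) in which, for every object $X$, the copy morphism $\mathrm{copy}_X$ is an initial dilation of $\mathrm{id}_X$. (2) For every object $X$, the identity $\mathrm{id}_X$ admits an initial dilation $\iota\colon X\to X\otimes E$ such that the marginal $(\mathrm{del}_X\otimes\mathrm{id}_E)\circ\iota\colon X\to E$ is non-creative. Moreover, if these conditions hold, then the Markov category structure in (1) is unique.
   Context: A symmetric monoidal category $(\mathcal D,\otimes,I)$ is semicartesian if the unit $I$ is terminal; write $\mathrm{del}_X\colon X\to I$ for the unique morphism (unitors suppressed). A Markov category is a symmetric monoidal category in which every object $X$ carries morphisms $\mathrm{copy}_X\colon X\to X\otimes X$ and $\mathrm{del}_X\colon X\to I$ forming a commutative comonoid, compatible with the monoidal structure ($\mathrm{copy}_{X\otimes Y}$ is $\mathrm{copy}_X\otimes\mathrm{copy}_Y$ followed by swapping the middle factors, $\mathrm{del}_{X\otimes Y}=\mathrm{del}_X\otimes\mathrm{del}_Y$), with $I$ terminal. In a semicartesian category: a dilation of $p\colon A\to X$ is a morphism $\pi\colon A\to X\otimes E$ for some object $E$ (the environment) with $(\mathrm{id}_X\otimes\mathrm{del}_E)\circ\pi=p$. Given a dilation $\pi\colon A\to X\otimes E$ of $p$ and morphisms $f_1,f_2\colon E\to E'$,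 say $f_1$ and $f_2$ are $\pi$-dilationally equal if for every dilation $\rho\colon A\to X\otimes E\otimes F$ of $\pi$ one has $(\mathrm{id}_X\otimes f_1\otimes\mathrm{id}_F)\circ\rho=(\mathrm{id}_X\otimes f_2\otimes\mathrm{id}_F)\circ\rho$. A dilation $\pi\colon A\to X\otimes E$ of $p$ is initial if for every dilation $\pi'\colon A\to X\otimes E'$ of $p$ there exists $f\colon E\to E'$ with $(\mathrm{id}_X\otimes f)\circ\pi=\pi'$, and any two such $f$ are $\pi$-dilationally equal. A morphism $p\colon A\to X$ is non-creative if every dilation $\pi\colon A\to X\otimes E$ of $p$ is of the form $\pi=(p\otimes\mathrm{id}_E)\circ\iota$ for some dilation $\iota\colon A\to A\otimes E$ of $\mathrm{id}_A$. *)

Set Implicit Arguments.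

Record SMC := {
  ob : Type;
  hom : ob -> ob -> Type;
  comp : forall A B C : ob, hom B C -> hom A B -> hom A C;
  idm : forall A, hom A A;
  tens : ob -> ob -> ob;
  tensm : forall A B C D, hom A B -> hom C D -> hom (tens A C) (tens B D);
  unit : ob;
  assoc : forall A B C, hom (tens (tens A B) C) (tens A (tens B C));
  assoc_inv : forall A B C, hom (tens A (tens B C)) (tens (tens A B) C);
  lunit : forall A, hom (tens unit A) A;
  lunit_inv : forall A, hom A (tens unit A);
  runit : forall A, hom (tens A unit) A;
  runit_inv : forall A, hom A (tens A unit);
  braid : forall A B, hom (tens A B) (tens B A);
  comp_assoc : forall A B C D (f : hom A B) (g : hom B C) (h : hom C D),
      comp h (comp g f) = comp (comp h g) f;
  comp_id_l : forall A B (f : hom A B), comp (idm B) f = f;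
  comp_id_r : forall A B (f : hom A B), comp f (idm A) = f;
  tens_id : forall A B, tensm (idm A) (idm B) = idm (tens A B);
  tens_comp : forall A B C A' B' C' (f : hom A B) (g : hom B C)
      (f' : hom A' B') (g' : hom B' C'),
      tensm (comp g f) (comp g' f') = comp (tensm g g') (tensm f f');
  assoc_iso1 : forall A B C, comp (assoc A B C) (assoc_inv A B C) = idm _;
  assoc_iso2 : forall A B C, comp (assoc_inv A B C) (assoc A B C) = idm _;
  lunit_iso1 : forall A, comp (lunit A) (lunit_inv A) = idm _;
  lunit_iso2 : forall A, comp (lunit_inv A) (lunit A) = idm _;
  runit_iso1 : forall A, comp (runit A) (runit_inv A) = idm _;
  runit_iso2 : forall A, comp (runit_inv A) (runit A) = idm _;
  braid_sym : forall A B, comp (braid B A) (braid A B) = idm _;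
  assoc_nat : forall A A' B B' C C' (f : hom A A') (g : hom B B') (h : hom C C'),
      comp (assoc A' B' C') (tensm (tensm f g) h)
      = comp (tensm f (tensm g h)) (assoc A B C);
  lunit_nat : forall A B (f : hom A B),
      comp (lunit B) (tensm (idm unit) f) = comp f (lunit A);
  runit_nat : forall A B (f : hom A B),
      comp (runit B) (tensm f (idm unit)) = comp f (runit A);
  braid_nat : forall A A' B B' (f : hom A A') (g : hom B B'),
      comp (braid A' B') (tensm f g) = comp (tensm g f) (braid A B);
  pentagon : forall A B C D,
      comp (assoc A B (tens C D)) (assoc (tens A B) C D)
      = comp (tensm (idm A) (assoc B C D))
             (comp (assoc A (tens B C) D) (tensm (assoc A B C) (idm D)));
  triangle : forall A B,
      comp (tensm (idm A) (lunit B)) (assoc A unit B) = tensm (runit A) (idm B);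
  hexagon : forall A B C,
      comp (assoc B C A) (comp (braid A (tens B C)) (assoc A B C))
      = comp (tensm (idm B) (braid A C))
             (comp (assoc B A C) (tensm (braid A B) (idm C)))
}.

Arguments comp {s A B C} _ _.
Arguments idm {s} A.
Arguments tens {s} _ _.
Arguments tensm {s A B C D} _ _.
Arguments unit {s}.
Arguments assoc {s} A B C.
Arguments assoc_inv {s} A B C.
Arguments lunit {s} A.
Arguments lunit_inv {s} A.
Arguments runit {s} A.
Arguments runit_inv {s} A.
Arguments braid {s} A B.

Notation "g ∘ f" := (comp g f) (at level 40, left associativity).

Record SemicartSMC := {
  smc :> SMC;
  del : forall A : ob smc, hom smc A unit;
  del_unique : forall (A : ob smc) (f : hom smc A unit), f = del A
}.

Arguments del {s} A.

Section Dilations.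
Variable C : SemicartSMC.

Definition is_dilation {A X E : ob C} (p : hom C A X) (pi : hom C A (tens X E)) : Prop :=
  runit X ∘ tensm (idm X) (del E) ∘ pi = p.

Definition dil_equal {A X E E' : ob C} (pi : hom C A (tens X E)) (f1 f2 : hom C E E') : Prop :=
  forall (F : ob C) (rho : hom C A (tens (tens X E) F)),
    is_dilation pi rho ->
    tensm (tensm (idm X) f1) (idm F) ∘ rho = tensm (tensm (idm X) f2) (idm F) ∘ rho.

Definition initial_dilation {A X E : ob C} (p : hom C A X) (pi : hom C A (tens X E)) : Prop :=
  is_dilation p pi /\
  forall (E' : ob C) (pi' : hom C A (tens X E')),
    is_dilation p pi' ->
    (exists f : hom C E E', tensm (idm X) f ∘ pi = pi') /\
    (forall f1 f2 : hom C E E',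
        tensm (idm X) f1 ∘ pi = pi' -> tensm (idm X) f2 ∘ pi = pi' ->
        dil_equal pi f1 f2).

Definition non_creative {A X : ob C} (p : hom C A X) : Prop :=
  forall (E : ob C) (pi : hom C A (tens X E)),
    is_dilation p pi ->
    exists iota : hom C A (tens A E),
      is_dilation (idm A) iota /\ pi = tensm p (idm E) ∘ iota.

Definition middle_swap (X Y : ob C) : hom C (tens (tens X X) (tens Y Y)) (tens (tens X Y) (tens X Y)) :=
  assoc_inv X Y (tens X Y)
  ∘ tensm (idm X) (assoc Y X Y ∘ tensm (braid X Y) (idm Y) ∘ assoc_inv X Y Y)
  ∘ assoc X X (tens Y Y).

Definition is_markov_copy (copy : forall X : ob C, hom C X (tens X X)) : Prop :=
  (forall X, lunit X ∘ tensm (del X) (idm X) ∘ copy X = idm X) /\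
  (forall X, runit X ∘ tensm (idm X) (del X) ∘ copy X = idm X) /\
  (forall X, assoc X X X ∘ tensm (copy X) (idm X) ∘ copy X
             = tensm (idm X) (copy X) ∘ copy X) /\
  (forall X, braid X X ∘ copy X = copy X) /\
  (forall X Y, copy (tens X Y) = middle_swap X Y ∘ tensm (copy X) (copy Y)) /\
  (forall X Y : ob C, del (tens X Y) = lunit unit ∘ tensm (del X) (del Y)).

End Dilations.

Arguments is_dilation {C A X E} _ _.
Arguments dil_equal {C A X E E'} _ _ _.
Arguments initial_dilation {C A X E} _ _.
Arguments non_creative {C A X} _.
Arguments is_markov_copy {C} _.

From Stdlib Require Import IndefiniteDescription ChoiceFacts.

(* If c : X -> X ⊗ X is an initial dilation of id_X whose second marginal is id_X, then every
   dilation d of id_X factors as (id ⊗ m) ∘ c with m the second marginal of d, so a dilation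
   of id_X is determined by its second marginal.  Each Markov axiom, and the uniqueness of
   the structure, then compares two dilations of the identity with equal marginals.

   Conversely, let ι be an initial dilation of id_X whose marginal m is non-creative.  The
   swap of ι is a dilation of m, so non-creativity gives κ : X -> X ⊗ X with
   swap ∘ ι = (m ⊗ id) ∘ κ.  Then c = swap ∘ κ has both marginals id_X and
   ι = (id ⊗ m) ∘ c; initiality of ι yields g with (id ⊗ g) ∘ ι = c, hence g ∘ m = id, and
   this retraction transfers initiality from ι to c. *)

Ltac reassoc := repeat rewrite <- comp_assoc.
Ltac reassoc_at h := rewrite (comp_assoc _ _ _ _ _ _ _ h).

Section MonoidalCoherence.
Context {C : SMC}.

Lemma split_epi_cancel {A B D : ob C} (p : hom C A B) (q : hom C B A) (f g : hom C B D) :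
  p ∘ q = idm B -> f ∘ p = g ∘ p -> f = g.
Proof.
  intros Hpq H.
  rewrite <- (comp_id_r _ _ _ f), <- (comp_id_r _ _ _ g), <- Hpq, !comp_assoc, H.
  reflexivity.
Qed.

Lemma split_mono_cancel {A B D : ob C} (p : hom C B D) (q : hom C D B) (f g : hom C A B) :
  q ∘ p = idm B -> p ∘ f = p ∘ g -> f = g.
Proof.
  intros Hqp H.
  rewrite <- (comp_id_l _ _ _ f), <- (comp_id_l _ _ _ g), <- Hqp, <- !comp_assoc, H.
  reflexivity.
Qed.

Lemma tens_idl_comp {A B D E : ob C} (f : hom C A B) (g : hom C B D) :
  tensm (idm E) (g ∘ f) = tensm (idm E) g ∘ tensm (idm E) f.
Proof. rewrite <- tens_comp, comp_id_l. reflexivity. Qed.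

Lemma tens_idr_comp {A B D E : ob C} (f : hom C A B) (g : hom C B D) :
  tensm (g ∘ f) (idm E) = tensm g (idm E) ∘ tensm f (idm E).
Proof. rewrite <- tens_comp, comp_id_l. reflexivity. Qed.

Lemma tens_split_lr {A B A' B' : ob C} (f : hom C A A') (g : hom C B B') :
  tensm f g = tensm (idm A') g ∘ tensm f (idm B).
Proof. rewrite <- tens_comp, comp_id_l, comp_id_r. reflexivity. Qed.

Lemma tens_split_rl {A B A' B' : ob C} (f : hom C A A') (g : hom C B B') :
  tensm f g = tensm f (idm B') ∘ tensm (idm A) g.
Proof. rewrite <- tens_comp, comp_id_l, comp_id_r. reflexivity. Qed.

Lemma tens_unit_l_inj {A B : ob C} (f g : hom C A B) :
  tensm (idm unit) f = tensm (idm unit) g -> f = g.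
Proof.
  intros H. apply (split_epi_cancel (lunit A) (lunit_inv A)); [apply lunit_iso1|].
  rewrite <- !lunit_nat, H. reflexivity.
Qed.

Lemma tens_unit_r_inj {A B : ob C} (f g : hom C A B) :
  tensm f (idm unit) = tensm g (idm unit) -> f = g.
Proof.
  intros H. apply (split_epi_cancel (runit A) (runit_inv A)); [apply runit_iso1|].
  rewrite <- !runit_nat, H. reflexivity.
Qed.

Lemma assoc_inv_nat {A A' B B' D D' : ob C} (f : hom C A A') (g : hom C B B') (h : hom C D D') :
  assoc_inv A' B' D' ∘ tensm f (tensm g h) = tensm (tensm f g) h ∘ assoc_inv A B D.
Proof.
  apply (split_mono_cancel (assoc A' B' D') (assoc_inv A' B' D')); [apply assoc_iso2|].
  rewrite comp_assoc, assoc_iso1, comp_id_l, comp_assoc, assoc_nat, <- comp_assoc,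
    assoc_iso1, comp_id_r.
  reflexivity.
Qed.

(* Kelly's consequences of the pentagon and triangle axioms, proved after tensoring with I. *)
Lemma lunit_tens_assoc (A B : ob C) :
  lunit (tens A B) ∘ assoc unit A B = tensm (lunit A) (idm B).
Proof.
  apply tens_unit_l_inj.
  apply (split_epi_cancel (assoc unit (tens unit A) B ∘ tensm (assoc unit unit A) (idm B))
                      (tensm (assoc_inv unit unit A) (idm B) ∘ assoc_inv unit (tens unit A) B)).
  { rewrite <- comp_assoc; reassoc_at (tensm (assoc unit unit A) (idm B)).
    rewrite <- tens_comp, assoc_iso1, comp_id_l, tens_id, comp_id_l. apply assoc_iso1. }
  rewrite tens_idl_comp. reassoc.
  rewrite <- pentagon, comp_assoc, triangle, <- (tens_id _ A B), <- assoc_nat.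
  rewrite comp_assoc, <- assoc_nat, <- comp_assoc, <- tens_comp, triangle, comp_id_l.
  reflexivity.
Qed.

Lemma runit_tens_assoc (A B : ob C) :
  tensm (idm A) (runit B) ∘ assoc A B unit = runit (tens A B).
Proof.
  apply tens_unit_r_inj.
  apply (split_mono_cancel (assoc A B unit) (assoc_inv A B unit)); [apply assoc_iso2|].
  rewrite <- (triangle _ (tens A B) unit), <- (tens_id _ A B), comp_assoc, assoc_nat.
  reassoc. rewrite pentagon.
  reassoc_at (tensm (idm A) (tensm (idm B) (lunit unit))).
  rewrite <- tens_idl_comp, triangle.
  reassoc_at (tensm (idm A) (tensm (runit B) (idm unit))).
  rewrite <- assoc_nat. reassoc. rewrite <- tens_idr_comp. reflexivity.
Qed.

(* The hexagon at (A, I, I) reduces this to the triangle and Kelly's identity. *)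
Lemma lunit_braid (A : ob C) : lunit A ∘ braid A unit = runit A.
Proof.
  apply tens_unit_r_inj.
  apply (split_mono_cancel (braid A unit) (braid unit A)); [apply braid_sym|].
  transitivity (lunit (tens unit A)
                ∘ (assoc unit unit A ∘ (braid A (tens unit unit) ∘ assoc A unit unit))).
  - rewrite hexagon, comp_assoc, lunit_nat, <- comp_assoc.
    reassoc_at (lunit (tens A unit)). rewrite lunit_tens_assoc, <- tens_idr_comp. reflexivity.
  - rewrite comp_assoc, lunit_tens_assoc, comp_assoc, <- braid_nat, <- comp_assoc, triangle.
    reflexivity.
Qed.

Lemma runit_braid (A : ob C) : runit A ∘ braid unit A = lunit A.
Proof. rewrite <- lunit_braid, <- comp_assoc, braid_sym, comp_id_r. reflexivity. Qed.

Lemma lunit_tens_assoc_inv (A B : ob C) :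
  tensm (lunit A) (idm B) ∘ assoc_inv unit A B = lunit (tens A B).
Proof.
  rewrite <- lunit_tens_assoc, <- comp_assoc, assoc_iso1, comp_id_r. reflexivity.
Qed.

Lemma runit_tens_assoc_inv (A B : ob C) :
  runit (tens A B) ∘ assoc_inv A B unit = tensm (idm A) (runit B).
Proof.
  rewrite <- runit_tens_assoc, <- comp_assoc, assoc_iso1, comp_id_r. reflexivity.
Qed.

Lemma triangle_inv (A B : ob C) :
  tensm (runit A) (idm B) ∘ assoc_inv A unit B = tensm (idm A) (lunit B).
Proof. rewrite <- triangle, <- comp_assoc, assoc_iso1, comp_id_r. reflexivity. Qed.

Definition shuffle (B D E : ob C) : hom C (tens B (tens D E)) (tens D (tens B E)) :=
  assoc D B E ∘ tensm (braid B D) (idm E) ∘ assoc_inv B D E.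

Definition interchange (A B D E : ob C) :
    hom C (tens (tens A B) (tens D E)) (tens (tens A D) (tens B E)) :=
  assoc_inv A D (tens B E) ∘ tensm (idm A) (shuffle B D E) ∘ assoc A B (tens D E).

Lemma shuffle_nat {B B' D D' E E' : ob C} (b : hom C B B') (d : hom C D D') (e : hom C E E') :
  shuffle B' D' E' ∘ tensm b (tensm d e) = tensm d (tensm b e) ∘ shuffle B D E.
Proof.
  unfold shuffle. reassoc. rewrite assoc_inv_nat. reassoc_at (tensm (braid B' D') (idm E')).
  rewrite <- tens_comp, braid_nat, comp_id_l, <- (comp_id_r _ _ _ e), tens_comp.
  reassoc. reassoc_at (assoc D' B' E'). rewrite assoc_nat. reassoc. rewrite comp_id_r.
  reflexivity.
Qed.

Lemma interchange_nat {A A' B B' D D' E E' : ob C} (a : hom C A A') (b : hom C B B')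
    (d : hom C D D') (e : hom C E E') :
  interchange A' B' D' E' ∘ tensm (tensm a b) (tensm d e)
  = tensm (tensm a d) (tensm b e) ∘ interchange A B D E.
Proof.
  unfold interchange. reassoc. rewrite assoc_nat.
  reassoc_at (tensm (idm A') (shuffle B' D' E')).
  rewrite <- tens_comp, shuffle_nat, comp_id_l, <- (comp_id_r _ _ _ a), tens_comp.
  reassoc. reassoc_at (assoc_inv A' D' (tens B' E')). rewrite assoc_inv_nat. reassoc.
  rewrite comp_id_r. reflexivity.
Qed.

Lemma lunit_shuffle (B E : ob C) :
  lunit (tens B E) ∘ shuffle B unit E = tensm (idm B) (lunit E).
Proof.
  unfold shuffle. reassoc. rewrite comp_assoc, lunit_tens_assoc.
  reassoc_at (tensm (lunit B) (idm E)). rewrite <- tens_idr_comp, lunit_braid, triangle_inv.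
  reflexivity.
Qed.

Lemma shuffle_lunit (D : ob C) :
  tensm (idm D) (lunit unit) ∘ shuffle unit D unit = lunit (tens D unit).
Proof.
  apply (split_mono_cancel (runit D) (runit_inv D)); [apply runit_iso2|].
  unfold shuffle. reassoc.
  reassoc_at (tensm (idm D) (lunit unit)). rewrite triangle, comp_assoc, runit_nat. reassoc.
  reassoc_at (runit (tens D unit)). rewrite runit_nat. reassoc.
  rewrite runit_tens_assoc_inv, comp_assoc, runit_braid, lunit_nat.
  reflexivity.
Qed.

Lemma runit_interchange (A D : ob C) :
  runit (tens A D) ∘ tensm (idm (tens A D)) (lunit unit) ∘ interchange A unit D unit
  = tensm (runit A) (runit D).
Proof.
  unfold interchange. rewrite <- tens_id. reassoc.
  reassoc_at (tensm (tensm (idm A) (idm D)) (lunit unit)). rewrite <- assoc_inv_nat. reassoc.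
  rewrite comp_assoc, runit_tens_assoc_inv.
  reassoc_at (tensm (idm A) (tensm (idm D) (lunit unit))). rewrite <- tens_idl_comp, shuffle_lunit.
  rewrite triangle, <- tens_comp, comp_id_l, comp_id_r.
  reflexivity.
Qed.

Lemma lunit_interchange (B E : ob C) :
  lunit (tens B E) ∘ tensm (lunit unit) (idm (tens B E)) ∘ interchange unit B unit E
  = tensm (lunit B) (lunit E).
Proof.
  unfold interchange. reassoc.
  reassoc_at (tensm (lunit unit) (idm (tens B E))).
  rewrite lunit_tens_assoc_inv, comp_assoc, <- lunit_nat. reassoc.
  reassoc_at (tensm (idm unit) (lunit (tens B E))).
  rewrite <- tens_idl_comp, lunit_shuffle, comp_assoc, lunit_nat. reassoc.
  rewrite lunit_tens_assoc, <- tens_comp, comp_id_l, comp_id_r.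
  reflexivity.
Qed.

End MonoidalCoherence.

Section Semicartesian.
Context {C : SemicartSMC}.

Lemma del_comp {A B : ob C} (f : hom C A B) : del B ∘ f = del A.
Proof. apply del_unique. Qed.

Lemma del_tens (X Y : ob C) : del (tens X Y) = lunit unit ∘ tensm (del X) (del Y).
Proof. symmetry. apply del_unique. Qed.

Definition proj_fst (X E : ob C) : hom C (tens X E) X := runit X ∘ tensm (idm X) (del E).

Definition proj_snd (X E : ob C) : hom C (tens X E) E := lunit E ∘ tensm (del X) (idm E).

Lemma proj_fst_tens {X X' E E' : ob C} (f : hom C X X') (g : hom C E E') :
  proj_fst X' E' ∘ tensm f g = f ∘ proj_fst X E.
Proof.
  unfold proj_fst. reassoc.
  rewrite <- tens_comp, comp_id_l, del_comp, tens_split_rl, comp_assoc, runit_nat, <- comp_assoc.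
  reflexivity.
Qed.

Lemma proj_snd_tens {X X' E E' : ob C} (f : hom C X X') (g : hom C E E') :
  proj_snd X' E' ∘ tensm f g = g ∘ proj_snd X E.
Proof.
  unfold proj_snd. reassoc.
  rewrite <- tens_comp, comp_id_l, del_comp, tens_split_lr, comp_assoc, lunit_nat, <- comp_assoc.
  reflexivity.
Qed.

Lemma proj_fst_braid (X E : ob C) : proj_fst E X ∘ braid X E = proj_snd X E.
Proof.
  unfold proj_fst, proj_snd. reassoc. rewrite <- braid_nat, comp_assoc, runit_braid.
  reflexivity.
Qed.

Lemma proj_snd_braid (X E : ob C) : proj_snd E X ∘ braid X E = proj_fst X E.
Proof.
  unfold proj_fst, proj_snd. reassoc. rewrite <- braid_nat, comp_assoc, lunit_braid.
  reflexivity.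
Qed.

Lemma proj_fst_assoc (X Y Z : ob C) :
  proj_fst X (tens Y Z) ∘ assoc X Y Z = proj_fst X Y ∘ proj_fst (tens X Y) Z.
Proof.
  unfold proj_fst at 1. rewrite del_tens, tens_idl_comp. reassoc.
  rewrite <- assoc_nat. reassoc_at (tensm (idm X) (lunit unit)).
  rewrite triangle, <- tens_comp, comp_id_l. fold (proj_fst X Y).
  rewrite tens_split_rl, comp_assoc, runit_nat.
  unfold proj_fst. reassoc. reflexivity.
Qed.

Lemma proj_snd_assoc (X Y Z : ob C) :
  proj_snd X (tens Y Z) ∘ assoc X Y Z = tensm (proj_snd X Y) (idm Z).
Proof.
  unfold proj_snd. rewrite <- (tens_id _ Y Z). reassoc.
  rewrite <- assoc_nat, comp_assoc, lunit_tens_assoc, <- tens_comp, comp_id_l.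
  reflexivity.
Qed.

Lemma proj_fst_interchange (A B D E : ob C) :
  proj_fst (tens A D) (tens B E) ∘ interchange A B D E
  = tensm (proj_fst A B) (proj_fst D E).
Proof.
  unfold proj_fst at 1. rewrite del_tens, tens_idl_comp, <- tens_id. reassoc.
  rewrite <- interchange_nat, tens_id, !comp_assoc, runit_interchange, <- tens_comp.
  reflexivity.
Qed.

Lemma proj_snd_interchange (A B D E : ob C) :
  proj_snd (tens A D) (tens B E) ∘ interchange A B D E
  = tensm (proj_snd A B) (proj_snd D E).
Proof.
  unfold proj_snd at 1. rewrite del_tens, tens_idr_comp, <- tens_id. reassoc.
  rewrite <- interchange_nat, tens_id, !comp_assoc, lunit_interchange, <- tens_comp.
  reflexivity.
Qed.

Lemma non_creative_idm (A : ob C) : non_creative (idm A).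
Proof.
  intros E pi Hpi. exists pi. split; [exact Hpi|]. rewrite tens_id, comp_id_l. reflexivity.
Qed.

Lemma is_dilation_of_env_map {A X E E' : ob C} {p : hom C A X} {pi : hom C A (tens X E)}
    {pi' : hom C A (tens X E')} {m : hom C E' E} :
  tensm (idm X) m ∘ pi' = pi -> is_dilation p pi -> is_dilation p pi'.
Proof.
  intros Hm Hpi. change (proj_fst X E ∘ pi = p) in Hpi. change (proj_fst X E' ∘ pi' = p).
  rewrite <- Hpi, <- Hm, comp_assoc, proj_fst_tens, comp_id_l. reflexivity.
Qed.

Lemma initial_dilation_of_section {A X E E' : ob C} {p : hom C A X}
    {iota : hom C A (tens X E)} {c : hom C A (tens X E')} {m : hom C E' E} {g : hom C E E'} :
  initial_dilation p iota -> tensm (idm X) m ∘ c = iota -> g ∘ m = idm E' ->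
  initial_dilation p c.
Proof.
  intros [Hiota Hinit] Hc Hgm.
  split; [exact (is_dilation_of_env_map Hc Hiota)|].
  intros E'' pi Hpi. destruct (Hinit E'' pi Hpi) as [[h Hh] Huniq]. split.
  - exists (h ∘ m). rewrite tens_idl_comp, <- comp_assoc, Hc. exact Hh.
  - intros f1 f2 H1 H2 F rho Hrho.
    assert (Hfactor : forall f : hom C E' E'',
               tensm (idm X) (f ∘ g) ∘ iota = tensm (idm X) f ∘ c).
    { intros f. rewrite <- Hc, comp_assoc, <- tens_idl_comp, <- comp_assoc, Hgm, comp_id_r.
      reflexivity. }
    assert (Hequal : dil_equal iota (f1 ∘ g) (f2 ∘ g))
      by (apply Huniq; rewrite Hfactor; assumption).
    assert (Hrho' : is_dilation iota (tensm (tensm (idm X) m) (idm F) ∘ rho)).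
    { change (proj_fst (tens X E) F ∘ (tensm (tensm (idm X) m) (idm F) ∘ rho) = iota).
      rewrite comp_assoc, proj_fst_tens, <- comp_assoc, Hrho. exact Hc. }
    assert (Hcancel : forall f : hom C E' E'',
      tensm (tensm (idm X) (f ∘ g)) (idm F) ∘ tensm (tensm (idm X) m) (idm F)
      = tensm (tensm (idm X) f) (idm F)).
    { intros f. rewrite <- tens_idr_comp, <- tens_idl_comp, <- comp_assoc, Hgm, comp_id_r.
      reflexivity. }
    specialize (Hequal F _ Hrho'). rewrite !comp_assoc, !Hcancel in Hequal. exact Hequal.
Qed.

Definition is_initial_copy (X : ob C) (c : hom C X (tens X X)) : Prop :=
  initial_dilation (idm X) c /\ proj_snd X X ∘ c = idm X.

Lemma initial_copy_factor {X E : ob C} (c : hom C X (tens X X)) (d : hom C X (tens X E)) :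
  is_initial_copy X c -> is_dilation (idm X) d -> d = tensm (idm X) (proj_snd X E ∘ d) ∘ c.
Proof.
  intros [[_ Hinit] Hc] Hd. destruct (Hinit E d Hd) as [[f Hf] _].
  rewrite <- Hf at 2. rewrite comp_assoc, proj_snd_tens, <- comp_assoc, Hc, comp_id_r.
  symmetry. exact Hf.
Qed.

Lemma dilation_id_eq {X E : ob C} (c : hom C X (tens X X)) (d1 d2 : hom C X (tens X E)) :
  is_initial_copy X c -> proj_fst X E ∘ d1 = idm X -> proj_fst X E ∘ d2 = idm X ->
  proj_snd X E ∘ d1 = proj_snd X E ∘ d2 -> d1 = d2.
Proof.
  intros Hc H1 H2 Hsnd.
  rewrite (initial_copy_factor _ _ Hc H1), (initial_copy_factor _ _ Hc H2), Hsnd. reflexivity.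
Qed.

Lemma initial_copy_unique {X : ob C} (c1 c2 : hom C X (tens X X)) :
  is_initial_copy X c1 -> is_initial_copy X c2 -> c1 = c2.
Proof.
  intros Hc1 Hc2. pose proof Hc1 as [[Hfst1 _] Hsnd1]. pose proof Hc2 as [[Hfst2 _] Hsnd2].
  apply (dilation_id_eq c1 _ _ Hc1); [exact Hfst1 | exact Hfst2 | congruence].
Qed.

Lemma initial_copy_coassoc {X : ob C} (c : hom C X (tens X X)) :
  is_initial_copy X c -> assoc X X X ∘ tensm c (idm X) ∘ c = tensm (idm X) c ∘ c.
Proof.
  intros Hc. pose proof Hc as [[Hfst _] Hsnd].
  apply (dilation_id_eq c _ _ Hc); reassoc.
  - rewrite comp_assoc, proj_fst_assoc. reassoc. reassoc_at (proj_fst (tens X X) X).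
    rewrite proj_fst_tens. reassoc. rewrite Hfst, comp_id_r. exact Hfst.
  - rewrite comp_assoc, proj_fst_tens, comp_id_l. exact Hfst.
  - transitivity c.
    + rewrite comp_assoc, proj_snd_assoc, comp_assoc, <- tens_comp, Hsnd, comp_id_l, tens_id.
      apply comp_id_l.
    + rewrite comp_assoc, proj_snd_tens, <- comp_assoc, Hsnd. symmetry. apply comp_id_r.
Qed.

Lemma initial_copy_cocomm {X : ob C} (c : hom C X (tens X X)) :
  is_initial_copy X c -> braid X X ∘ c = c.
Proof.
  intros Hc. pose proof Hc as [[Hfst _] Hsnd].
  apply (dilation_id_eq c _ _ Hc); [| exact Hfst |]; rewrite comp_assoc.
  - rewrite proj_fst_braid. exact Hsnd.
  - rewrite proj_snd_braid, Hsnd. exact Hfst.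
Qed.

Lemma initial_copy_tens {X Y : ob C} (cX : hom C X (tens X X)) (cY : hom C Y (tens Y Y))
    (cXY : hom C (tens X Y) (tens (tens X Y) (tens X Y))) :
  is_initial_copy X cX -> is_initial_copy Y cY -> is_initial_copy (tens X Y) cXY ->
  cXY = middle_swap C X Y ∘ tensm cX cY.
Proof.
  intros [[HfX _] HsX] [[HfY _] HsY] Hc. pose proof Hc as [[Hfst _] Hsnd].
  change (middle_swap C X Y) with (interchange X X Y Y).
  apply (dilation_id_eq cXY _ _ Hc); [exact Hfst| |].
  - rewrite comp_assoc, proj_fst_interchange, <- tens_comp, HfX, HfY. apply tens_id.
  - rewrite comp_assoc, proj_snd_interchange, <- tens_comp, HsX, HsY, tens_id. exact Hsnd.
Qed.

Lemma markov_of_initial_copies (copy : forall X : ob C, hom C X (tens X X)) :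
  (forall X, is_initial_copy X (copy X)) -> is_markov_copy copy.
Proof.
  intros Hcopy. split; [|split; [|split; [|split; [|split]]]].
  - intros X. apply Hcopy.
  - intros X. apply Hcopy.
  - intros X. apply initial_copy_coassoc, Hcopy.
  - intros X. apply initial_copy_cocomm, Hcopy.
  - intros X Y. apply initial_copy_tens; apply Hcopy.
  - intros X Y. apply del_tens.
Qed.

Lemma initial_copy_of_markov (copy : forall X : ob C, hom C X (tens X X)) :
  is_markov_copy copy -> (forall X, initial_dilation (idm X) (copy X)) ->
  forall X, is_initial_copy X (copy X).
Proof. intros [Hcounit _] Hinit X. split; [apply Hinit | apply Hcounit]. Qed.

Lemma initial_copy_of_non_creative {X E : ob C} (iota : hom C X (tens X E)) :
  initial_dilation (idm X) iota -> non_creative (proj_snd X E ∘ iota) ->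
  exists c, is_initial_copy X c.
Proof.
  intros Hiota Hnc. set (m := proj_snd X E ∘ iota).
  destruct (Hnc X (braid X E ∘ iota)) as [kappa [Hkappa Hswap]].
  { change (proj_fst E X ∘ (braid X E ∘ iota) = m). rewrite comp_assoc, proj_fst_braid.
    reflexivity. }
  fold m in Hswap. set (c := braid X X ∘ kappa).
  assert (Hc_iota : tensm (idm X) m ∘ c = iota).
  { unfold c. rewrite comp_assoc, <- braid_nat, <- comp_assoc, <- Hswap, comp_assoc,
      braid_sym. apply comp_id_l. }
  assert (Hc_snd : proj_snd X X ∘ c = idm X).
  { unfold c. rewrite comp_assoc, proj_snd_braid. exact Hkappa. }
  destruct (proj2 Hiota X c (is_dilation_of_env_map Hc_iota (proj1 Hiota))) as [[g Hg] _].
  assert (Hgm : g ∘ m = idm X).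
  { rewrite <- Hc_snd, <- Hg, comp_assoc, proj_snd_tens, <- comp_assoc. reflexivity. }
  exists c. split; [exact (initial_dilation_of_section Hiota Hc_iota Hgm) | exact Hc_snd].
Qed.

End Semicartesian.

Theorem theorem4p19 (C : SemicartSMC) :
  ((exists copy : forall X : ob C, hom C X (tens X X),
       is_markov_copy copy /\ forall X, initial_dilation (idm X) (copy X))
   <->
   (forall X : ob C, exists (E : ob C) (iota : hom C X (tens X E)),
       initial_dilation (idm X) iota /\
       non_creative (lunit E ∘ tensm (del X) (idm E) ∘ iota)))
  /\
  (forall copy1 copy2 : forall X : ob C, hom C X (tens X X),
      is_markov_copy copy1 -> (forall X, initial_dilation (idm X) (copy1 X)) ->
      is_markov_copy copy2 -> (forall X, initial_dilation (idm X) (copy2 X)) ->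
      forall X, copy1 X = copy2 X).
Proof.
  split; [split|].
  - intros [copy [Hmarkov Hinit]] X. exists X, (copy X).
    destruct (initial_copy_of_markov copy Hmarkov Hinit X) as [Hcopy Hcounit].
    split; [exact Hcopy|].
    change (non_creative (proj_snd X X ∘ copy X)). rewrite Hcounit. apply non_creative_idm.
  - intros H.
    destruct (non_dep_dep_functional_choice functional_choice _ (is_initial_copy (C:=C)))
      as [copy Hcopy].
    { intros X. destruct (H X) as [E [iota [Hiota Hnc]]].
      exact (initial_copy_of_non_creative iota Hiota Hnc). }
    exists copy. split; [apply markov_of_initial_copies|]; apply Hcopy.
  - intros copy1 copy2 Hmarkov1 Hinit1 Hmarkov2 Hinit2 X.
    apply initial_copy_unique; apply initial_copy_of_markov; assumption.
Qed.
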